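(* Let $X=(X_1,X_2)$ be a two-good random valuation with $X_1,X_2$ independent. Then \[ \textsc{Rev}(X_1,X_2)\le\Big(\sqrt{\textsc{Rev}(X_1)}+\sqrt{\textsc{Rev}(X_2)}\Big)^2 . \]
   Context: A two-good random valuation is a random vector in $\mathbb{R}_+^2$. A mechanism is a pair $\mu=(q,s)$ of Borel functions $q:\mathbb{R}_+^2\to[0,1]^2$, $s:\mathbb{R}_+^2\to\mathbb{R}$, with buyer payoff $b(x)=q(x)\cdot x-s(x)$; IR: $b(x)\ge0$ for all $x$; IC: $b(x)\ge q(\tilde x)\cdot x-s(\tilde x)$ for all $x,\tilde x$. $\textsc{Rev}(X)=\sup\mathbb{E}[s(X)]$ over all IC and IR mechanisms; for one good, $\textsc{Rev}(X_i)=\sup_{p\ge0}p\,\mathbb{P}[X_i\ge p]$. *)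

From HB Require Import structures.
From mathcomp Require Import all_boot all_order all_algebra.
From mathcomp Require Import all_classical all_reals all_analysis.
Set Implicit Arguments. Unset Strict Implicit. Unset Printing Implicit Defensive.
Import Order.TTheory GRing.Theory Num.Theory.
Local Open Scope classical_set_scope.
Local Open Scope ring_scope.

Definition indep2 (R : realType) (d : measure_display) (T : measurableType d)
  (P : probability T R) (X1 X2 : T -> R) : Prop :=
  forall A B : set R, measurable A -> measurable B ->
    P (X1 @^-1` A `&` X2 @^-1` B) = (P (X1 @^-1` A) * P (X2 @^-1` B))%E.

Definition nonneg2 (R : realType) (x : R * R) : Prop := 0 <= x.1 /\ 0 <= x.2.

(* a (Borel) mechanism mu = (q, s) with q = (q1, q2) : R_+^2 -> [0,1]^2,
   s : R_+^2 -> R; buyer payoff b(x) = q(x).x - s(x) *)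
Definition payoff (R : realType) (q1 q2 s : R * R -> R) (y x : R * R) : R :=
  q1 y * x.1 + q2 y * x.2 - s y.

Definition IC_IR_mechanism (R : realType) (q1 q2 s : R * R -> R) : Prop :=
  [/\ (measurable_fun setT q1 /\ measurable_fun setT q2 /\ measurable_fun setT s),
      (forall x, nonneg2 x -> 0 <= q1 x <= 1 /\ 0 <= q2 x <= 1),
      (forall x, nonneg2 x -> 0 <= payoff q1 q2 s x x) &
      (forall x y, nonneg2 x -> nonneg2 y ->
                  payoff q1 q2 s y x <= payoff q1 q2 s x x)].

Definition Rev2 (R : realType) (d : measure_display) (T : measurableType d)
  (P : probability T R) (X1 X2 : T -> R) : \bar R :=
  ereal_sup [set r | exists q1 q2 s, IC_IR_mechanism q1 q2 s /\
     r = (\int[P]_w (s (X1 w, X2 w))%:E)%E].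

Definition Rev1 (R : realType) (d : measure_display) (T : measurableType d)
  (P : probability T R) (Y : T -> R) : \bar R :=
  ereal_sup [set r | exists p : R, 0 <= p /\
     r = (p%:E * P [set w | (p <= Y w)%R])%E].

Definition esqrt (R : realType) (x : \bar R) : \bar R :=
  match x with
  | r%:E => (Num.sqrt r)%:E
  | +oo%E => +oo%E
  | -oo%E => 0%E
  end.

(* An IC and IR one-good mechanism with allocation [Q] charges a bidder of
   value [z] at most the expected price she pays when the good is offered at
   price [threshold Q u] for [u] uniform on [0,1]. Each posted price earns at
   most Rev(X), hence so does the mechanism.
   For two goods and [c > 0], split the valuations along the cone
   [x2 <= c * x1]. There the payment is at most the residual payment
   [s - q2 * x2] plus [x2]. Freezing [x2] turns the residual into the payment
   of a one-good mechanism for good 1, so by independence it earns at most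
   Rev(X1); and E[X2; X2 <= c X1] <= c Rev(X1), because the price [x2 / c]
   sells good 1 on that event. With the symmetric bound,
   Rev(X) <= (1 + c) Rev(X1) + (1 + 1/c) Rev(X2), and the infimum over [c]
   is the right-hand side. *)

From HB Require Import structures.
From mathcomp Require Import all_boot all_order all_algebra.
From mathcomp Require Import all_classical all_reals all_analysis.
From mathcomp Require Import measurable_realfun.
From mathcomp Require Import ring lra.
Set Implicit Arguments. Unset Strict Implicit.
Import Order.TTheory GRing.Theory Num.Theory.
Local Open Scope classical_set_scope.
Local Open Scope ring_scope.

Section threshold.
Variables (R : realType) (Q : R -> R).

(* This is [0] when no value has allocation above [u], as [inf set0 = 0]. *)
Definition threshold (u : R) : R := inf [set y | 0 <= y /\ u < Q y].

Lemma threshold_ge0 u : 0 <= threshold u.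
Proof.
have [[y Sy]|noS] := pselect (exists y, 0 <= y /\ u < Q y).
  by apply: lb_le_inf => [|z []//]; exists y.
rewrite /threshold (_ : [set y | 0 <= y /\ u < Q y] = set0) ?inf0 //.
by apply/seteqP; split => // y Sy; apply: noS; exists y.
Qed.

Lemma threshold_le u z : 0 <= z -> u < Q z -> threshold u <= z.
Proof. by move=> z0 uz; apply: ge_inf => //; exists 0 => y []. Qed.

Lemma lb_le_threshold u y : (exists2 z, 0 <= z & u < Q z) ->
  (forall z, 0 <= z -> u < Q z -> y <= z) -> y <= threshold u.
Proof. by move=> [z z0 uz] yS; apply: lb_le_inf => [|v [] /yS//]; exists z. Qed.

Lemma measurable_threshold : measurable_fun setT threshold.
Proof.
apply: (measurability (@RGenCInfty.G R)) => [|/= _ [_] [r] -> <-].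
  exact: RGenCInfty.measurableE.
apply: measurableI => //; apply: is_interval_measurable => s t /=.
rewrite !in_itv /= !andbT => rs rt u /andP[su ut]; rewrite in_itv /= andbT.
have [[z [z0 uz]]|noS] := pselect (exists z, 0 <= z /\ u < Q z).
  apply: (le_trans rs); apply: lb_le_threshold => [|v v0 uv]; first by exists z.
  by apply: threshold_le => //; apply: le_lt_trans uv.
suff Sempty v : v >= u -> [set y | 0 <= y /\ v < Q y] = set0.
  by move: rt; rewrite /threshold !Sempty.
move=> uv; apply/seteqP; split => // y [y0 vy]; apply: noS.
by exists y; split => //; apply: le_lt_trans vy.
Qed.

End threshold.

Section threshold_payment.
Variables (R : realType) (Q : R -> R).

(* The expected price paid at value [z] when the good is offered at price
   [threshold Q u] for [u] uniform on [0,1]: the bidder buys iff [u < Q z]. *)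
Definition threshold_payment (z : R) : \bar R :=
  \int[lebesgue_measure]_(u in `[0, Q z[) (threshold Q u)%:E.

Let mthreshold (D : set R) : measurable_fun D (EFin \o threshold Q).
Proof. by apply/measurable_EFinP; apply: measurable_funTS; exact: measurable_threshold. Qed.

Lemma threshold_payment_ge0 z : (0 <= threshold_payment z)%E.
Proof. by apply: integral_ge0 => u _; rewrite lee_fin threshold_ge0. Qed.

Lemma threshold_payment_fin_num z : 0 <= z -> threshold_payment z \is a fin_num.
Proof.
move=> z0; rewrite ge0_fin_numE ?threshold_payment_ge0 //.
have le_cst : (threshold_payment z <=
    \int[lebesgue_measure]_(u in `[0%R, Q z[) cst z%:E u)%E.
  apply: ge0_le_integral => //; [|exact: mthreshold|].
    by move=> u _; rewrite lee_fin threshold_ge0.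
  move=> u /=; rewrite in_itv /= => /andP[u0 uz].
  by rewrite lee_fin threshold_le.
apply: (le_lt_trans le_cst); rewrite integral_cst //= lebesgue_measure_itv /=.
by case: ifP => _; rewrite ?mule0 -?EFinB -?EFinM ltry.
Qed.

Lemma le_integral_threshold a b c : 0 <= c -> a <= b ->
  (forall u, a <= u -> u < b -> c <= threshold Q u) ->
  ((c * (b - a))%:E <= \int[lebesgue_measure]_(u in `[a, b[) (threshold Q u)%:E)%E.
Proof.
move=> c0 ab cQ.
have -> : (c * (b - a))%:E = (\int[lebesgue_measure]_(u in `[a, b[) cst c%:E u)%E.
  rewrite integral_cst //= lebesgue_measure_itv /= lte_fin.
  by case: ltgtP ab => // -> _; rewrite subrr mulr0 mule0.
apply: ge0_le_integral => //; first exact: mthreshold.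
by move=> u /=; rewrite in_itv /= => /andP[au ub]; rewrite lee_fin cQ.
Qed.

Hypotheses (Q_ge0 : forall z, 0 <= z -> 0 <= Q z)
  (Q_nd : forall y w, 0 <= y -> y <= w -> Q y <= Q w).

Lemma threshold_paymentD y w : 0 <= y -> y <= w ->
  threshold_payment w = (threshold_payment y +
    \int[lebesgue_measure]_(u in `[Q y, Q w[) (threshold Q u)%:E)%E.
Proof.
move=> y0 yw; have Qyw := Q_nd y0 yw.
rewrite /threshold_payment -ge0_integral_setU //; last 3 first.
- exact: mthreshold.
- by move=> u _; rewrite lee_fin threshold_ge0.
- apply/disj_setPS => u [] /=; rewrite !in_itv /= => /andP[_ uy] /andP[yu _].
  by have := lt_le_trans uy yu; rewrite ltxx.
congr integral; apply/seteqP; split => u /=; rewrite !in_itv /=.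
  move=> /andP[u0 uw]; have [uy|uy] := ltP u (Q y); [left|right];
    by apply/andP; split.
case=> /andP[a b]; apply/andP; split => //; first exact: lt_le_trans Qyw.
exact: le_trans (Q_ge0 y0) a.
Qed.

Lemma threshold_payment_increment y w : 0 <= y -> y <= w ->
  y * (Q w - Q y) <= fine (threshold_payment w) - fine (threshold_payment y).
Proof.
move=> y0 yw; have w0 := le_trans y0 yw.
suff : ((fine (threshold_payment y) + y * (Q w - Q y))%:E <=
        (fine (threshold_payment w))%:E)%E by rewrite lee_fin; lra.
rewrite !fineK ?threshold_payment_fin_num // (threshold_paymentD y0 yw) EFinD.
rewrite fineK ?threshold_payment_fin_num //; apply: leeD2l.
apply: le_integral_threshold => // [|u yu uw]; first exact: Q_nd.
apply: lb_le_threshold => [|v v0 uv]; first by exists w.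
by rewrite leNgt; apply/negP => vy; have := Q_nd v0 (ltW vy); lra.
Qed.

End threshold_payment.

Definition IC_IR_mechanism1 (R : realType) (Q t : R -> R) : Prop :=
  [/\ (forall z, 0 <= z -> 0 <= Q z <= 1),
      (forall z, 0 <= z -> 0 <= Q z * z - t z) &
      (forall y z, 0 <= y -> 0 <= z -> Q y * z - t y <= Q z * z - t z)].

Lemma IC_allocation_nondecreasing (R : realType) (Q t : R -> R) :
  (forall y z, 0 <= y -> 0 <= z -> Q y * z - t y <= Q z * z - t z) ->
  forall y w, 0 <= y -> y <= w -> Q y <= Q w.
Proof.
move=> IC y w y0 yw; have w0 := le_trans y0 yw.
have := IC y w y0 w0; have := IC w y w0 y0.
rewrite le_eqVlt in yw; case/orP: yw => [/eqP -> //|yw] ICwy ICyw.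
have : 0 <= (Q w - Q y) * (w - y) by lra.
by rewrite pmulr_lge0 ?subr_gt0 // subr_ge0.
Qed.

Section IC_IR_mechanism1.
Variables (R : realType) (Q t : R -> R).
Hypothesis Mt : IC_IR_mechanism1 Q t.

Let Q_ge0 z : 0 <= z -> 0 <= Q z.
Proof. by case: Mt => Q01 _ _ /Q01 /andP[]. Qed.

Let Q_nd : forall y w, 0 <= y -> y <= w -> Q y <= Q w.
Proof. by case: Mt => _ _; exact: IC_allocation_nondecreasing. Qed.

Lemma payment_increment y w : 0 <= y -> y <= w ->
  t w - t y <= fine (threshold_payment Q w) - fine (threshold_payment Q y)
               + (Q w - Q y) * (w - y).
Proof.
move=> y0 yw; case: Mt => _ _ /(_ y w y0 (le_trans y0 yw)) IC.
have := threshold_payment_increment Q_ge0 Q_nd y0 yw; lra.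
Qed.

Lemma payment_telescope h k : 0 <= h ->
  t (k%:R * h) - t 0 <=
    fine (threshold_payment Q (k%:R * h)) - fine (threshold_payment Q 0)
    + h * (Q (k%:R * h) - Q 0).
Proof.
move=> h0; elim: k => [|k IH]; first by rewrite mul0r !subrr mulr0 addr0.
have kh0 : 0 <= k%:R * h by rewrite mulr_ge0.
have khS : k.+1%:R * h = k%:R * h + h by rewrite -addn1 natrD mulrDl mul1r.
have := payment_increment kh0 (_ : k%:R * h <= k.+1%:R * h).
rewrite khS (addrC (k%:R * h)) addrK lerDr => /(_ h0).
lra.
Qed.

(* Riemann-sum the increments over a grid of mesh [z / m.+1]: the error term
   [h * (Q z - Q 0)] is at most the mesh since [0 <= Q <= 1]. *)
Lemma payment_le_threshold_payment z : 0 <= z ->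
  ((Num.max (t z) 0)%:E <= threshold_payment Q z)%E.
Proof.
move=> z0; case: Mt => Q01 IR _.
have G0 : 0 <= fine (threshold_payment Q 0).
  by apply: fine_ge0; exact: threshold_payment_ge0.
rewrite -(fineK (threshold_payment_fin_num Q z0)) lee_fin ge_max.
rewrite fine_ge0 ?threshold_payment_ge0 // andbT.
apply/ler_addgt0Pr => e e0.
set m := Num.truncn (z / e); set h := z / m.+1%:R.
have h0 : 0 <= h by rewrite divr_ge0.
have he : h < e.
  rewrite /h ltr_pdivrMr // mulrC -ltr_pdivrMr //; exact: truncnS_gt.
have := payment_telescope m.+1 h0.
have -> : m.+1%:R * h = z by rewrite /h mulrC divfK // pnatr_eq0.
have t0 : t 0 <= 0 by have := IR 0 (lexx 0); lra.
have /andP[Q00 _] := Q01 0 (lexx 0); have /andP[_ Qz1] := Q01 z z0.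
have : h * (Q z - Q 0) <= h by rewrite ler_piMr //; lra.
lra.
Qed.

End IC_IR_mechanism1.

Section measurable_order.
Variables (d : measure_display) (T : measurableType d) (R : realType) (f g : T -> R).
Hypotheses (mf : measurable_fun setT f) (mg : measurable_fun setT g).

Lemma measurable_ler : measurable [set x | f x <= g x].
Proof. by rewrite -[X in measurable X]setTI; exact: measurable_fun_ler. Qed.

Lemma measurable_ltr : measurable [set x | f x < g x].
Proof. by rewrite -[X in measurable X]setTI; exact: measurable_fun_ltr. Qed.

End measurable_order.

Section Rev1.
Variables (R : realType) (d : measure_display) (T : measurableType d).
Variables (P : probability T R) (X : T -> R).

Lemma Rev1_ge0 : (0 <= Rev1 P X)%E.
Proof. by apply: ereal_sup_ubound; exists 0; rewrite mul0e. Qed.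

Lemma posted_price_le_Rev1 p : 0 <= p ->
  (p%:E * P [set w | (p <= X w)%R] <= Rev1 P X)%E.
Proof. by move=> p0; apply: ereal_sup_ubound; exists p. Qed.

End Rev1.

Section one_good_revenue.
Variables (R : realType) (d : measure_display) (T : measurableType d).
Variables (P : probability T R) (X : T -> R) (Q t : R -> R).
Hypotheses (mX : measurable_fun setT X) (X_ge0 : forall w, 0 <= X w).
Hypotheses (mQ : measurable_fun setT Q) (mt : measurable_fun setT t).
Hypothesis Mt : IC_IR_mechanism1 Q t.

Let sold := [set p : T * R | 0 <= p.2 < Q (X p.1)].
Let price (p : T * R) : \bar R := (threshold Q p.2 * \1_sold p)%:E.

Let measurable_sold : measurable sold.
Proof.
have -> : sold = [set p | 0 <= p.2] `&` [set p | p.2 < Q (X p.1)].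
  by apply/seteqP; split => p /= => [/andP[]|[? ?]]; last apply/andP.
apply: measurableI.
  by apply: (measurable_ler (f := cst 0) (g := snd)) => //; exact: measurable_snd.
apply: (measurable_ltr (f := snd) (g := fun p => Q (X p.1))).
  exact: measurable_snd.
exact: measurableT_comp mQ (measurableT_comp mX measurable_fst).
Qed.

Let measurable_price : measurable_fun setT price.
Proof.
apply/measurable_EFinP; apply: measurable_funM; last exact: measurable_indic.
exact: measurableT_comp (measurable_threshold Q) measurable_snd.
Qed.

Let price_ge0 p : (0 <= price p)%E.
Proof. by rewrite lee_fin mulr_ge0 ?threshold_ge0. Qed.

Let threshold_paymentE w :
  threshold_payment Q (X w) = (\int[lebesgue_measure]_u price (w, u))%E.
Proof.
rewrite /threshold_payment integral_mkcond; apply: eq_integral => u _.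
rewrite /price /patch indicE; case: ifPn => [/set_mem uQ|/negP uQ].
  by rewrite mem_set ?mulr1 //; rewrite /= in_itv in uQ.
by rewrite memNset ?mulr0 // => uS; apply: uQ; apply/mem_set; rewrite /= in_itv.
Qed.

Let lottery_revenue_le u :
  (\int[P]_w price (w, u) <= Rev1 P X * (\1_`[0%R, 1%R[ u)%:E)%E.
Proof.
have [[w0 /andP[u0 uQ]]|unsold] := pselect (exists w, 0 <= u < Q (X w)); last first.
  rewrite integral0_eq ?mule_ge0 ?Rev1_ge0 ?lee_fin //.
  move=> w _; rewrite /price indicE memNset ?mulr0 // => uw.
  by apply: unsold; exists w.
have [Q01 _ _] := Mt; have /andP[_ Q1] := Q01 _ (X_ge0 w0).
rewrite indicE mem_set /=; last by rewrite in_itv /= u0 (lt_le_trans uQ).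
rewrite mule1; apply: le_trans (posted_price_le_Rev1 P X (threshold_ge0 Q u)).
have msold_u : measurable [set w | 0 <= u < Q (X w)].
  have -> : [set w | 0 <= u < Q (X w)] = [set w | u < Q (X w)].
    by apply/seteqP; split => w /=; [case/andP|rewrite u0].
  by apply: measurable_ltr => //; exact: measurableT_comp mQ mX.
rewrite (eq_integral (fun w => (threshold Q u)%:E * (\1_[set w | 0 <= u < Q (X w)] w)%:E))%E;
  last by move=> w _; rewrite /price !indicE -EFinM.
rewrite ge0_integralZl ?lee_fin ?threshold_ge0 //; last first.
  by apply/measurable_EFinP; exact: measurable_indic.
rewrite integral_indic // setIT; apply: lee_wpmul2l; first by rewrite lee_fin threshold_ge0.
apply: le_measure; rewrite ?inE //; first exact: measurable_ler.
by move=> w /andP[_ uw]; exact: threshold_le.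
Qed.

Lemma IC_IR_mechanism1_revenue_le_Rev1 :
  (\int[P]_w (Num.max (t (X w)) 0)%:E <= Rev1 P X)%E.
Proof.
apply: (@le_trans _ _ (\int[P]_w \int[lebesgue_measure]_u price (w, u))%E).
  apply: ge0_le_integral => //.
  - by move=> w _; rewrite lee_fin le_max lexx orbT.
  - apply/measurable_EFinP; apply: measurable_maxr => //.
    exact: measurableT_comp.
  - exact: measurable_fun_fubini_tonelli_F.
  by move=> w _; rewrite -threshold_paymentE payment_le_threshold_payment.
rewrite (fubini_tonelli (m1 := P) (m2 := lebesgue_measure) price measurable_price price_ge0).
apply: (@le_trans _ _ (\int[lebesgue_measure]_u (Rev1 P X * (\1_`[0%R, 1%R[ u)%:E))%E).
  apply: ge0_le_integral => //.
  - by move=> u _; apply: integral_ge0.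
  - exact: measurable_fun_fubini_tonelli_G.
  apply: emeasurable_funM => //.
  by apply/measurable_EFinP; exact: measurable_indic.
rewrite ge0_integralZl //; last 2 first.
- by apply/measurable_EFinP; exact: measurable_indic.
- exact: Rev1_ge0.
rewrite integral_indic // setIT.
change (Rev1 P X * lebesgue_measure (`[0%R, 1%R[ : set R) <= Rev1 P X)%E.
by rewrite lebesgue_measure_itv /= lte_fin ltr01 -EFinB subr0 mule1.
Qed.

End one_good_revenue.

Lemma indep2_sym (R : realType) (d : measure_display) (T : measurableType d)
  (P : probability T R) (X1 X2 : T -> R) : indep2 P X1 X2 -> indep2 P X2 X1.
Proof. by move=> indep A B mA mB; rewrite setIC indep // muleC. Qed.

Lemma IC_IR_mechanism_swap (R : realType) (q1 q2 s : R * R -> R) :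
  IC_IR_mechanism q1 q2 s ->
  IC_IR_mechanism (fun x => q2 (x.2, x.1)) (fun x => q1 (x.2, x.1))
                  (fun x => s (x.2, x.1)).
Proof.
case=> [[mq1 [mq2 ms]] q01 IR IC].
have mswap : measurable_fun setT (fun x : R * R => (x.2, x.1)).
  by apply/measurable_fun_pairP; split; [exact: measurable_snd|exact: measurable_fst].
split.
- by split; [|split]; apply: measurableT_comp mswap.
- by move=> x [x1 x2]; have [] := q01 (x.2, x.1) (conj x2 x1).
- by move=> x [x1 x2]; have := IR (x.2, x.1) (conj x2 x1); rewrite /payoff /=; lra.
- move=> x y [x1 x2] [y1 y2].
  by have := IC (x.2, x.1) (y.2, y.1) (conj x2 x1) (conj y2 y1); rewrite /payoff /=; lra.
Qed.

Lemma IC_IR_mechanism_section (R : realType) (q1 q2 s : R * R -> R) y :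
  IC_IR_mechanism q1 q2 s -> 0 <= y ->
  IC_IR_mechanism1 (fun z => q1 (z, y)) (fun z => s (z, y) - q2 (z, y) * y).
Proof.
case=> _ q01 IR IC y0; split.
- by move=> z z0; have [] := q01 (z, y) (conj z0 y0).
- by move=> z z0; have := IR (z, y) (conj z0 y0); rewrite /payoff /=; lra.
- move=> a z a0 z0; have := IC (z, y) (a, y) (conj z0 y0) (conj a0 y0).
  by rewrite /payoff /=; lra.
Qed.

Lemma integral_le_max0 (d : measure_display) (T : measurableType d)
  (R : realType) (mu : measure T R) (f : T -> R) :
  (\int[mu]_x (f x)%:E <= \int[mu]_x (Num.max (f x) 0)%:E)%E.
Proof.
rewrite integralE -[leRHS]sube0.
have -> : (\int[mu]_x ((fun x => (f x)%:E)^\+ x) = \int[mu]_x (Num.max (f x) 0)%:E)%E.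
  by apply: eq_integral => x _; rewrite funeposE -EFin_max.
by apply: leeB => //; apply: integral_ge0 => x _; exact: funeneg_ge0.
Qed.

Definition cone (R : realType) (c : R) : set (R * R) := [set x | x.2 <= c * x.1].

Lemma measurable_cone (R : realType) (c : R) : measurable (cone c).
Proof.
apply: (measurable_ler (f := snd)); first exact: measurable_snd.
by apply: measurable_funM => //; exact: measurable_fst.
Qed.

Section independent_valuations.
Variables (R : realType) (d : measure_display) (T : measurableType d).
Variables (P : probability T R) (X1 X2 : T -> R).
Hypotheses (mX1 : measurable_fun setT X1) (mX2 : measurable_fun setT X2).

Let mX : measurable_fun setT (fun w => (X1 w, X2 w)).
Proof. exact/measurable_fun_pairP. Qed.

Lemma integral_le_cone_split (F : R * R -> R) c :
  measurable_fun setT F -> 0 < c ->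
  (\int[P]_w (F (X1 w, X2 w))%:E <=
     (\int[P]_w (Num.max (F (X1 w, X2 w)) 0 * \1_(cone c) (X1 w, X2 w))%:E) +
     (\int[P]_w (Num.max (F (X1 w, X2 w)) 0 * \1_(cone c^-1) (X2 w, X1 w))%:E))%E.
Proof.
move=> mF c0; have mFX := measurableT_comp mF mX.
have max0_ge0 w : 0 <= Num.max (F (X1 w, X2 w)) 0 by rewrite le_max lexx orbT.
have mFcone (e : R) (Y : T -> R * R) : measurable_fun setT Y ->
    measurable_fun setT (fun w => (Num.max (F (X1 w, X2 w)) 0 * \1_(cone e) (Y w))%:E).
  move=> mY; apply/measurable_EFinP; apply: measurable_funM.
    exact: measurable_maxr.
  exact: measurableT_comp (measurable_indic (measurable_cone e)) mY.
apply: le_trans (integral_le_max0 _ _) _.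
rewrite -ge0_integralD //; last 4 first.
- by move=> w _; rewrite lee_fin mulr_ge0.
- exact: mFcone.
- by move=> w _; rewrite lee_fin mulr_ge0.
- by apply: mFcone; exact/measurable_fun_pairP.
apply: ge0_le_integral => //.
- by move=> w _; rewrite lee_fin.
- by apply/measurable_EFinP; exact: measurable_maxr.
- by apply: emeasurable_funD; apply: mFcone; exact/measurable_fun_pairP.
move=> w _; rewrite -EFinD lee_fin !indicE.
have [inA|notA] := boolP ((X1 w, X2 w) \in cone c).
  by rewrite mulr1 lerDl mulr_ge0.
rewrite mulr0 add0r mem_set ?mulr1 // /cone /= mulrC ler_pdivlMr // mulrC.
have /negP : ~ (X2 w <= c * X1 w) by move=> inA; move/negP: notA; apply; exact/mem_set.
by rewrite -ltNge => /ltW.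
Qed.

Hypotheses (X1_ge0 : forall w, 0 <= X1 w) (X2_ge0 : forall w, 0 <= X2 w).
Hypothesis indep : indep2 P X1 X2.

(* Restricting [h] to the nonnegative quadrant costs nothing here and makes
   it nonnegative everywhere, as Tonelli's theorem requires. *)
Lemma indep2_integral_le (h : R * R -> \bar R) (K : \bar R) :
  measurable_fun setT h -> (forall x, nonneg2 x -> (0 <= h x)%E) ->
  (forall y, 0 <= y -> (\int[P]_w h (X1 w, y) <= K)%E) ->
  (\int[P]_w h (X1 w, X2 w) <= K)%E.
Proof.
move=> mh h0 hK.
pose Y1 : {mfun T >-> R} := HB.pack X1 (isMeasurableFun.Build _ _ _ _ X1 mX1).
pose Y2 : {mfun T >-> R} := HB.pack X2 (isMeasurableFun.Build _ _ _ _ X2 mX2).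
pose Y : {mfun T >-> (R * R)%type} := HB.pack (fun w => (X1 w, X2 w))
  (isMeasurableFun.Build _ _ _ _ (fun w => (X1 w, X2 w)) mX).
pose nonneg x : R * R := (Num.max x.1 0, Num.max x.2 0).
pose h' := h \o nonneg.
have mnonneg : measurable_fun setT nonneg.
  by apply/measurable_fun_pairP; split; apply: measurable_maxr.
have mh' : measurable_fun setT h' by exact: measurableT_comp mh mnonneg.
have h'0 x : (0 <= h' x)%E by apply: h0; split; rewrite /= le_max lexx orbT.
have K0 : (0 <= K)%E.
  apply: le_trans (hK 0 (lexx 0)); apply: integral_ge0 => w _.
  by apply: h0; split; [exact: X1_ge0|exact: lexx].
have -> : (\int[P]_w h (X1 w, X2 w) = \int[distribution P Y]_x h' x)%E.
  rewrite ge0_integral_distribution //; apply: eq_integral => w _.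
  by rewrite /h' /nonneg /= !max_l ?X1_ge0 ?X2_ge0.
rewrite (eq_measure_integral (distribution P Y1 \x distribution P Y2)%E); last first.
  (* on rectangles, the law of [Y] agrees with the product law by [indep] *)
  by move=> A mA _; apply/esym; apply: product_measure_unique.
rewrite fubini_tonelli2 //.
apply: (@le_trans _ _ (\int[distribution P Y2]_y cst K y)%E).
  apply: ge0_le_integral => //.
  - by move=> y _; apply: integral_ge0.
  - exact: measurable_fun_fubini_tonelli_G.
  move=> y _; rewrite /fubini_G ge0_integral_distribution //=; last first.
    exact: measurable_fun_pair1.
  under eq_integral => w _ do rewrite /h' /nonneg /= (max_l (X1_ge0 w)).
  by apply: hK; rewrite le_max lexx orbT.
by rewrite integral_cst // [X in (K * X)%E]probability_setT mule1.
Qed.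

Lemma indep2_cone_le c : 0 < c ->
  (\int[P]_w (X2 w * \1_(cone c) (X1 w, X2 w))%:E <= c%:E * Rev1 P X1)%E.
Proof.
move=> c0; apply: (indep2_integral_le (h := fun x => (x.2 * \1_(cone c) x)%:E)).
- apply/measurable_EFinP; apply: measurable_funM; first exact: measurable_snd.
  exact: measurable_indic (measurable_cone c).
- by move=> x [_ x2]; rewrite lee_fin mulr_ge0.
move=> y y0; set sells := [set w | (y / c <= X1 w)%R].
rewrite (eq_integral (fun w => y%:E * (\1_sells w)%:E))%E => [|w _]; last first.
  rewrite !indicE -EFinM /cone /sells; congr (_ * _%:R)%:E; congr nat_of_bool.
  by apply/idP/idP => /set_mem /= yX; apply/mem_set; move: yX; rewrite /= ler_pdivrMr // mulrC.
have msells : measurable sells by apply: (measurable_ler (f := cst (y / c))).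
rewrite ge0_integralZl ?lee_fin //; last by apply/measurable_EFinP; exact: measurable_indic.
rewrite integral_indic // setIT.
have -> : y%:E = (c%:E * (y / c)%:E)%E by rewrite -EFinM mulrC divfK ?gt_eqF.
rewrite -muleA; apply: lee_wpmul2l; first by rewrite lee_fin ltW.
by apply: posted_price_le_Rev1; exact: divr_ge0 y0 (ltW c0).
Qed.

Variables (q1 q2 s : R * R -> R).
Hypothesis M : IC_IR_mechanism q1 q2 s.

Lemma residual_revenue_le_Rev1 :
  (\int[P]_w (Num.max (s (X1 w, X2 w) - q2 (X1 w, X2 w) * X2 w) 0)%:E
     <= Rev1 P X1)%E.
Proof.
have [[mq1 [mq2 ms]] _ _ _] := M.
apply: (indep2_integral_le (h := fun x => (Num.max (s x - q2 x * x.2) 0)%:E)).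
- apply/measurable_EFinP; apply: measurable_maxr => //; apply: measurable_funB => //.
  by apply: measurable_funM => //; exact: measurable_snd.
- by move=> x _; rewrite lee_fin le_max lexx orbT.
move=> y y0; apply: (@IC_IR_mechanism1_revenue_le_Rev1 _ _ _ _ _
  (fun z => q1 (z, y)) (fun z => s (z, y) - q2 (z, y) * y)) => //.
- exact: measurable_fun_pair1.
- apply: measurable_funB; first exact: measurable_fun_pair1.
  by apply: measurable_funM => //; exact: measurable_fun_pair1.
- exact: IC_IR_mechanism_section.
Qed.

(* Pointwise, [s <= (s - q2 * x.2)^+ + x.2] because [q2 <= 1]. *)
Lemma IC_IR_cone_revenue_le c : 0 < c ->
  (\int[P]_w (Num.max (s (X1 w, X2 w)) 0 * \1_(cone c) (X1 w, X2 w))%:E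
     <= (1 + c)%:E * Rev1 P X1)%E.
Proof.
move=> c0; have [[mq1 [mq2 ms]] q01 _ _] := M.
have mcone : measurable_fun setT (fun w => \1_(cone c) (X1 w, X2 w) : R).
  exact: measurableT_comp (measurable_indic (measurable_cone c)) mX.
rewrite EFinD ge0_muleDl ?mul1e ?lee_fin ?(ltW c0) //.
apply: le_trans _ (leeD residual_revenue_le_Rev1 (indep2_cone_le c0)).
rewrite -ge0_integralD //; last 4 first.
- by move=> w _; rewrite lee_fin le_max lexx orbT.
- apply/measurable_EFinP; apply: measurable_maxr => //; apply: measurable_funB.
    exact: measurableT_comp ms mX.
  by apply: measurable_funM => //; exact: measurableT_comp mq2 mX.
- by move=> w _; rewrite lee_fin mulr_ge0.
- by apply/measurable_EFinP; exact: measurable_funM.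
apply: ge0_le_integral => //.
- by move=> w _; rewrite lee_fin mulr_ge0 // le_max lexx orbT.
- apply/measurable_EFinP; apply: measurable_funM => //.
  by apply: measurable_maxr => //; exact: measurableT_comp ms mX.
- apply: emeasurable_funD; apply/measurable_EFinP; last exact: measurable_funM.
  apply: measurable_maxr => //; apply: measurable_funB.
    exact: measurableT_comp ms mX.
  by apply: measurable_funM => //; exact: measurableT_comp mq2 mX.
move=> w _; rewrite -EFinD lee_fin indicE.
have /andP[q20 q21] := (q01 (X1 w, X2 w) (conj (X1_ge0 w) (X2_ge0 w))).2.
have x20 := X2_ge0 w; set x2 := X2 w in x20 *; set a := s _; set q := q2 _.
have qx2 : q * x2 <= x2 by rewrite ler_piMl.
set m := Num.max (a - q * x2) 0.
have am : a - q * x2 <= m by rewrite le_max lexx.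
have m0 : 0 <= m by rewrite le_max lexx orbT.
case: (_ \in _); rewrite /= ?mulr1 ?mulr0 ?addr0 // ge_max.
by apply/andP; split; lra.
Qed.

End independent_valuations.

(* [c = sqrt b / sqrt a] is optimal; perturbing both square roots by [delta]
   keeps [c] positive and defined when [a] or [b] vanishes. *)
Lemma le_sqr_sqrtD (R : realType) (a b e : R) : 0 <= a -> 0 <= b ->
  (forall c, 0 < c -> e <= (1 + c) * a + (1 + c^-1) * b) ->
  e <= (Num.sqrt a + Num.sqrt b) ^+ 2.
Proof.
move=> a0 b0 ecab; set A := Num.sqrt a; set B := Num.sqrt b.
have A0 : 0 <= A by exact: sqrtr_ge0.
have B0 : 0 <= B by exact: sqrtr_ge0.
have aA : a = A ^+ 2 by rewrite sqr_sqrtr.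
have bB : b = B ^+ 2 by rewrite sqr_sqrtr.
apply/ler_addgt0Pr => eps eps0.
have K0 : 0 < 2 * (A + B) + 1 by rewrite ltr_wpDl // mulr_ge0 // addr_ge0.
set delta := eps / (2 * (A + B) + 1).
have delta0 : 0 < delta by rewrite divr_gt0.
have delta_eps : 2 * delta * (A + B) <= eps.
  by rewrite -[leRHS](@divfK _ (2 * (A + B) + 1)) ?gt_eqF // -/delta; nra.
set u := A + delta; set v := B + delta.
have u0 : 0 < u by rewrite ltr_wpDl.
have v0 : 0 < v by rewrite ltr_wpDl.
have := ecab (v / u) (divr_gt0 v0 u0).
have -> : (1 + v / u) * a + (1 + (v / u)^-1) * b = (u + v) * (A ^+ 2 / u + B ^+ 2 / v).
  by rewrite aA bB invf_div; field; rewrite (gt_eqF u0) (gt_eqF v0).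
have Au : A ^+ 2 / u <= A by rewrite ler_pdivrMr // /u; nra.
have Bv : B ^+ 2 / v <= B by rewrite ler_pdivrMr // /v; nra.
have : (u + v) * (A ^+ 2 / u + B ^+ 2 / v) <= (u + v) * (A + B).
  by rewrite (ler_pM2l (addr_gt0 u0 v0)); exact: lerD.
have : (u + v) * (A + B) = (A + B) ^+ 2 + 2 * delta * (A + B) by rewrite /u /v; ring.
lra.
Qed.

Lemma lee_sqr_esqrtD (R : realType) (r1 r2 E : \bar R) : (0 <= r1)%E -> (0 <= r2)%E ->
  (forall c : R, (0 < c)%R -> E <= (1 + c)%:E * r1 + (1 + c^-1)%:E * r2)%E ->
  (E <= (esqrt r1 + esqrt r2) ^+ 2)%E.
Proof.
case: r1 => [a| |] //; case: r2 => [b| |] //; rewrite ?lee_fin => a0 b0 Ecab;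
  rewrite /esqrt; try by rewrite ?addey ?addye // expe2 mulyy leey.
case: E Ecab => [e| |] Ecab; last by rewrite leNye.
  rewrite -EFinD expe2 -EFinM lee_fin -expr2.
  apply: le_sqr_sqrtD => [||c c0]; [by rewrite -lee_fin|by rewrite -lee_fin|].
  by have := Ecab c c0; rewrite -!EFinM -EFinD lee_fin.
by have := Ecab 1 ltr01; rewrite -!EFinM -EFinD leye_eq.
Qed.

Unset Implicit Arguments.

Theorem proposition7 (R : realType) (d : measure_display) (T : measurableType d)
  (P : probability T R) (X1 X2 : T -> R)
  (mX1 : measurable_fun setT X1) (mX2 : measurable_fun setT X2)
  (X1ge0 : forall w, 0 <= X1 w) (X2ge0 : forall w, 0 <= X2 w)
  (indep : indep2 P X1 X2) :
  (Rev2 P X1 X2 <= (esqrt (Rev1 P X1) + esqrt (Rev1 P X2)) ^+ 2)%E.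
Proof.
apply: ge_ereal_sup => _ [q1 [q2 [s [M ->]]]].
apply: lee_sqr_esqrtD; [exact: Rev1_ge0|exact: Rev1_ge0|] => c c0.
have [[_ [_ ms]] _ _ _] := M.
apply: le_trans (integral_le_cone_split P mX1 mX2 ms c0) _.
apply: leeD.
  exact: (IC_IR_cone_revenue_le mX1 mX2 X1ge0 X2ge0 indep M c0).
have ci0 : 0 < c^-1 by rewrite invr_gt0.
exact: (IC_IR_cone_revenue_le mX2 mX1 X2ge0 X1ge0 (indep2_sym indep)
  (IC_IR_mechanism_swap M) ci0).
Qed.
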